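(* Let $X$ be a real Banach space, $\alpha$ an ordinal, $\varepsilon>0$, $f\in B_{X^*}$, and $M\subset X^*$ such that (i) $\mathrm{dist}(f,M)\ge\varepsilon$, and (ii) for every $\beta<\alpha$ and every weak$^*$-slice $S$ of $d_\varepsilon^\beta(B_{X^*})$ with $f\in S$, one has $S\cap M\neq\emptyset$. Then $f\in d_\varepsilon^\alpha(B_{X^*})$.
   Context: For $x\in X,t\in\mathbb R$, $H(x,t)=\{x^*\in X^*: x^*(x)>t\}$; a weak$^*$-slice of a weak$^*$-compact $K\subset X^*$ is a nonempty set $H(x,t)\cap K$; $d_\varepsilon K$ is $K$ minus the union of all weak$^*$-slices of $K$ of norm diameter $<\varepsilon$; $d_\varepsilon^0K=K$, $d_\varepsilon^{\beta+1}K=d_\varepsilon(d_\varepsilon^\beta K)$, $d_\varepsilon^\beta K=\bigcap_{\mu<\beta}d_\varepsilon^\mu K$ for limit $\beta$. A set $M$ satisfying (i),(ii) is called an $\varepsilon$-$\alpha$-obstacle for $f$. *)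

From Stdlib Require Import Reals.
Open Scope R_scope.

Record Banach := {
  carrier :> Type;
  vzero : carrier;
  vadd : carrier -> carrier -> carrier;
  vopp : carrier -> carrier;
  vscal : R -> carrier -> carrier;
  vnorm : carrier -> R;
  vadd_assoc : forall x y z, vadd x (vadd y z) = vadd (vadd x y) z;
  vadd_comm : forall x y, vadd x y = vadd y x;
  vadd_0 : forall x, vadd x vzero = x;
  vadd_opp : forall x, vadd x (vopp x) = vzero;
  vscal_1 : forall x, vscal 1 x = x;
  vscal_assoc : forall a b x, vscal a (vscal b x) = vscal (a * b) x;
  vscal_distr_l : forall a x y, vscal a (vadd x y) = vadd (vscal a x) (vscal a y);
  vscal_distr_r : forall a b x, vscal (a + b) x = vadd (vscal a x) (vscal b x);
  vnorm_nonneg : forall x, 0 <= vnorm x;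
  vnorm_eq0 : forall x, vnorm x = 0 -> x = vzero;
  vnorm_scal : forall a x, vnorm (vscal a x) = Rabs a * vnorm x;
  vnorm_triangle : forall x y, vnorm (vadd x y) <= vnorm x + vnorm y;
  complete : forall u : nat -> carrier,
    (forall eps, eps > 0 -> exists N, forall m n, (m >= N)%nat -> (n >= N)%nat ->
        vnorm (vadd (u m) (vopp (u n))) < eps) ->
    exists l, forall eps, eps > 0 -> exists N, forall n, (n >= N)%nat ->
        vnorm (vadd (u n) (vopp l)) < eps
}.

Section Dual.
Variable X : Banach.

(** Functionals on X; elements of X^* are the linear bounded ones. *)
Definition functional := X -> R.
Definition fset := functional -> Prop.

Definition linear (g : functional) : Prop :=
  (forall x y, g (vadd X x y) = g x + g y) /\
  (forall a x, g (vscal X a x) = a * g x).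

Definition dnorm_le (g : functional) (r : R) : Prop :=
  forall x, Rabs (g x) <= r * vnorm X x.

Definition in_dual (g : functional) : Prop :=
  linear g /\ exists r, dnorm_le g r.

Definition dual_ball : fset := fun g => linear g /\ dnorm_le g 1.

Definition fsub (g h : functional) : functional := fun x => g x - h x.

Definition diam_lt (S : fset) (eps : R) : Prop :=
  exists r, r < eps /\ forall g h, S g -> S h -> dnorm_le (fsub g h) r.

Definition slice (A : fset) (x : X) (t : R) : fset := fun g => A g /\ g x > t.

Definition d_eps (eps : R) (A : fset) : fset :=
  fun g => A g /\ ~ (exists x t, slice A x t g /\ diam_lt (slice A x t) eps).

Definition dist_ge (f : functional) (M : fset) (eps : R) : Prop :=
  forall m, M m -> forall r, dnorm_le (fsub f m) r -> eps <= r.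

End Dual.

(** Ordinals are represented by elements of a well-ordered type. *)
Definition well_order {W : Type} (lt : W -> W -> Prop) : Prop :=
  well_founded lt /\
  (forall a b c, lt a b -> lt b c -> lt a c) /\
  (forall a, ~ lt a a) /\
  (forall a b, lt a b \/ a = b \/ lt b a).

(** D is the transfinite derivation family: D β = d_eps^β (B_{X^*}) for all β : W,
    given by the zero / successor / limit clauses. *)
Definition is_derivation (X : Banach) {W : Type} (lt : W -> W -> Prop)
    (eps : R) (D : W -> fset X) : Prop :=
  forall b : W,
    ((forall m, ~ lt m b) -> forall g, D b g <-> dual_ball X g) /\
    (forall c, lt c b -> (forall m, ~ (lt c m /\ lt m b)) ->
        forall g, D b g <-> d_eps X eps (D c) g) /\
    ((exists m, lt m b) -> (forall c, lt c b -> exists m, lt c m /\ lt m b) ->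
        forall g, D b g <-> (forall m, lt m b -> D m g)).

From Stdlib Require Import Reals Classical Lra.
Open Scope R_scope.

(** An obstacle M keeps f inside every derived set: if f lies in
    a set A of functionals and every weak*-slice of A containing f also meets M,
    then no slice of A containing f can have diameter < eps, since it would
    contain both f and some m in M with dist(f, m) >= eps; hence f survives one
    derivation d_eps.  The theorem follows by transfinite induction on
    beta <= alpha: every ordinal is zero, a successor, or a limit; at zero
    D beta is the dual ball, which contains f; at a successor c+1 the one-step
    fact applies to A = D c (hypothesis (ii) at c < alpha); at a limit, f lies
    in every earlier D m by induction. *)

Lemma d_eps_obstacle (X : Banach) (eps : R) (A M : fset X) (f : functional X) :
  A f -> dist_ge X f M eps ->
  (forall x t, slice X A x t f -> exists m, M m /\ slice X A x t m) ->
  d_eps X eps A f.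
Proof.
  intros HAf Hdist Hmeet. split; [exact HAf|].
  intros [x [t [Hslf [r [Hr Hdiam]]]]].
  destruct (Hmeet x t Hslf) as [m [HMm Hslm]].
  assert (Hfar : eps <= r) by exact (Hdist m HMm r (Hdiam f m Hslf Hslm)).
  lra.
Qed.

Lemma ordinal_cases {W : Type} (lt : W -> W -> Prop) (b : W) :
  (forall m, ~ lt m b) \/
  (exists c, lt c b /\ forall m, ~ (lt c m /\ lt m b)) \/
  ((exists m, lt m b) /\ (forall c, lt c b -> exists m, lt c m /\ lt m b)).
Proof.
  destruct (classic (exists m, lt m b)) as [Hnonzero|Hzero].
  - destruct (classic (exists c, lt c b /\ forall m, ~ (lt c m /\ lt m b)))
      as [Hsucc|Hnosucc]; [right; left; exact Hsucc|].
    right; right; split; [exact Hnonzero|].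
    intros c Hcb. apply NNPP; intro Hno. apply Hnosucc.
    exists c; split; [exact Hcb|]. intros m Hm. apply Hno. exists m; exact Hm.
  - left. intros m Hm. apply Hzero. exists m; exact Hm.
Qed.

Lemma derivation_intro (X : Banach) {W : Type} (lt : W -> W -> Prop)
    (eps : R) (D : W -> fset X) (b : W) (g : functional X) :
  is_derivation X lt eps D ->
  dual_ball X g ->
  (forall c, lt c b -> (forall m, ~ (lt c m /\ lt m b)) -> d_eps X eps (D c) g) ->
  (forall m, lt m b -> D m g) ->
  D b g.
Proof.
  intros HD Hball Hsucc Hbelow. destruct (HD b) as [Hzero [HS HL]].
  destruct (ordinal_cases lt b) as [Hmin|[[c [Hcb Hmax]]|[Hnonzero Hlim]]].
  - exact (proj2 (Hzero Hmin g) Hball).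
  - exact (proj2 (HS c Hcb Hmax g) (Hsucc c Hcb Hmax)).
  - exact (proj2 (HL Hnonzero Hlim g) Hbelow).
Qed.

Theorem mainTheorem7 (X : Banach) (W : Type) (lt : W -> W -> Prop)
  (Hwo : well_order lt) (alpha : W) (eps : R) (Heps : eps > 0)
  (D : W -> fset X) (HD : is_derivation X lt eps D)
  (f : functional X) (Hf : dual_ball X f)
  (M : fset X) (HM : forall m, M m -> in_dual X m)
  (Hi : dist_ge X f M eps)
  (Hii : forall beta, lt beta alpha -> forall (x : X) (t : R),
           slice X (D beta) x t f ->
           exists m, M m /\ slice X (D beta) x t m) :
  D alpha f.
Proof.
  destruct Hwo as [Hwf [Htrans _]].
  enough (Hle : forall b, (b = alpha \/ lt b alpha) -> D b f) by (apply Hle; left; reflexivity).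
  intro b. induction b as [b IH] using (well_founded_ind Hwf). intros Hb.
  assert (Hbelow : forall c, lt c b -> lt c alpha).
  { intros c Hcb. destruct Hb as [->|Hba]; [exact Hcb|exact (Htrans _ _ _ Hcb Hba)]. }
  apply (derivation_intro X lt eps D b f HD Hf).
  - intros c Hcb _. apply (d_eps_obstacle X eps (D c) M f); [| exact Hi | exact (Hii c (Hbelow c Hcb))].
    apply IH; [exact Hcb | right; exact (Hbelow c Hcb)].
  - intros m Hmb. apply IH; [exact Hmb | right; exact (Hbelow m Hmb)].
Qed.
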